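(* Let $f=(f_1,f_2):\mathbb{R}^2\to\mathbb{R}^2$ be a smooth one-generic mapping having a cusp point at the origin with $f(\mathbf{0})=\mathbf{0}$, and assume $\operatorname{rank}Df(\mathbf{0})=1$, $dJ(\mathbf{0})\ne0$ and $F(\mathbf{0})=\mathbf{0}$. Then there exist rotations $L(x,y)=(ax-by,bx+ay)$, $R(x,y)=(cx-dy,dx+cy)$ ($a^2+b^2=c^2+d^2=1$) such that $g=(g_1,g_2)=L\circ f\circ R$, with $J'=\det Dg$, satisfies $$\frac{\partial g_1}{\partial x}(\mathbf{0})=\frac{\partial g_2}{\partial x}(\mathbf{0})=\frac{\partial g_2}{\partial y}(\mathbf{0})=0,\quad \frac{\partial g_1}{\partial y}(\mathbf{0})\ne0,\quad \frac{\partial J'}{\partial x}(\mathbf{0})=0,\quad \frac{\partial J'}{\partial y}(\mathbf{0})\ne0.$$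
   Context: $J=\det Df$ and $F=Df\cdot(-\partial J/\partial y,\ \partial J/\partial x)^T$. $f$ is one-generic if $dJ\ne0$ on $J^{-1}(0)$ (equivalently, $j^1f$ is transverse to the corank strata). A point $p\in S_1(f)=J^{-1}(0)$ with $T_pS_1(f)=\ker Df(p)$ is a cusp point if it is a simple zero of $dJ(\xi)$ on $S_1(f)$, $\xi$ a nonvanishing vector field along $S_1(f)$ in $\ker Df$. *)

From Stdlib Require Import Reals.
From Coquelicot Require Import Coquelicot.
Open Scope R_scope.

Definition dx (h : R -> R -> R) (x y : R) : R := Derive (fun t => h t y) x.
Definition dy (h : R -> R -> R) (x y : R) : R := Derive (fun t => h x t) y.

Fixpoint Ck2 (k : nat) (h : R -> R -> R) : Prop :=
  (forall x y, continuous (fun p : R * R => h (fst p) (snd p)) (x, y)) /\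
  match k with
  | O => True
  | S m => (forall x y, ex_derive (fun t => h t y) x /\ ex_derive (fun t => h x t) y)
           /\ Ck2 m (dx h) /\ Ck2 m (dy h)
  end.

Definition smooth2 (h : R -> R -> R) : Prop := forall k, Ck2 k h.

Definition smooth1_on (eps : R) (g : R -> R) : Prop :=
  forall (n : nat) (t : R), Rabs t < eps -> ex_derive_n g n t.

Definition Jac (f1 f2 : R -> R -> R) (x y : R) : R :=
  dx f1 x y * dy f2 x y - dy f1 x y * dx f2 x y.

Definition F1 (f1 f2 : R -> R -> R) (x y : R) : R :=
  dx f1 x y * (- dy (Jac f1 f2) x y) + dy f1 x y * dx (Jac f1 f2) x y.
Definition F2 (f1 f2 : R -> R -> R) (x y : R) : R :=
  dx f2 x y * (- dy (Jac f1 f2) x y) + dy f2 x y * dx (Jac f1 f2) x y.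

Definition dJ_nonzero (f1 f2 : R -> R -> R) (x y : R) : Prop :=
  dx (Jac f1 f2) x y <> 0 \/ dy (Jac f1 f2) x y <> 0.

Definition one_generic (f1 f2 : R -> R -> R) : Prop :=
  forall x y, Jac f1 f2 x y = 0 -> dJ_nonzero f1 f2 x y.

Definition rank2 (a b c d : R) : nat :=
  if Req_EM_T a 0 then
    if Req_EM_T b 0 then
      if Req_EM_T c 0 then
        if Req_EM_T d 0 then 0%nat else 1%nat
      else 1%nat
    else 1%nat
  else 1%nat.
Definition rank2x2 (a b c d : R) : nat :=
  if Req_EM_T (a * d - b * c) 0 then rank2 a b c d else 2%nat.

Definition rankDf (f1 f2 : R -> R -> R) (x y : R) : nat :=
  rank2x2 (dx f1 x y) (dy f1 x y) (dx f2 x y) (dy f2 x y).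

(* Cusp point p = (x0, y0) of f:
   p in S_1(f) = J^{-1}(0); near p, S_1(f) is parametrized by a regular smooth
   curve gamma with gamma(0) = p; T_p S_1(f) = span gamma'(0) equals ker Df(p);
   xi is a smooth nonvanishing vector field along S_1(f) with xi in ker Df;
   and t |-> dJ(gamma t)(xi t) has a simple zero at t = 0. *)
Definition cusp_point (f1 f2 : R -> R -> R) (x0 y0 : R) : Prop :=
  Jac f1 f2 x0 y0 = 0 /\
  exists (eps : R) (g1 g2 xi1 xi2 : R -> R),
    0 < eps /\
    smooth1_on eps g1 /\ smooth1_on eps g2 /\
    smooth1_on eps xi1 /\ smooth1_on eps xi2 /\
    g1 0 = x0 /\ g2 0 = y0 /\
    (Derive g1 0 <> 0 \/ Derive g2 0 <> 0) /\
    (forall t, Rabs t < eps ->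
       Jac f1 f2 (g1 t) (g2 t) = 0 /\
       (xi1 t <> 0 \/ xi2 t <> 0) /\
       dx f1 (g1 t) (g2 t) * xi1 t + dy f1 (g1 t) (g2 t) * xi2 t = 0 /\
       dx f2 (g1 t) (g2 t) * xi1 t + dy f2 (g1 t) (g2 t) * xi2 t = 0) /\
    (forall v1 v2 : R,
       (dx f1 x0 y0 * v1 + dy f1 x0 y0 * v2 = 0 /\
        dx f2 x0 y0 * v1 + dy f2 x0 y0 * v2 = 0)
       <-> exists s : R, v1 = s * Derive g1 0 /\ v2 = s * Derive g2 0) /\
    (let phi := fun t =>
        dx (Jac f1 f2) (g1 t) (g2 t) * xi1 t + dy (Jac f1 f2) (g1 t) (g2 t) * xi2 t in
     phi 0 = 0 /\ ex_derive phi 0 /\ Derive phi 0 <> 0).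

(** The hypothesis [F(0) = 0] says that the rotated gradient [(-J_y, J_x)] of
    [J] lies in [ker Df(0)], so rotating the source by the unit vector
    [(c, d)] along it makes [ker Df(0)] the x-axis and puts [dJ(0)] on the
    y-axis.  Since [Df(0) <> 0] and it kills [(c, d)], its value on the
    orthogonal vector [(-d, c)] is nonzero, and a rotation of the target moves
    that value onto the first axis.  Rotations have determinant one, so the
    Jacobian of [g] is [J] composed with the source rotation, and its gradient
    at the origin is the rotated [dJ(0)]. *)

From Stdlib Require Import Reals Lra.
From Coquelicot Require Import Coquelicot.
Open Scope R_scope.

Lemma differentiable_pt_lim_linear (l : R -> R -> R) p q x y :
  (forall s t, l s t = p * s + q * t) -> differentiable_pt_lim l x y p q.
Proof.
intros Hl eps. exists (mkposreal 1 Rlt_0_1). intros u v _ _.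
rewrite !Hl.
replace (p * u + q * v - (p * x + q * y) - (p * (u - x) + q * (v - y))) with 0 by ring.
rewrite Rabs_R0. apply Rmult_le_pos.
- apply Rlt_le, cond_pos.
- apply Rle_trans with (Rabs (u - x)); [apply Rabs_pos | apply Rmax_l].
Qed.

Lemma differentiable_pt_lim_mult (h k : R -> R -> R) x y hx hy kx ky :
  differentiable_pt_lim h x y hx hy -> differentiable_pt_lim k x y kx ky ->
  differentiable_pt_lim (fun u v => h u v * k u v) x y
    (hx * k x y + h x y * kx) (hy * k x y + h x y * ky).
Proof.
intros Hh Hk.
apply filterdiff_differentiable_pt_lim in Hh, Hk.
apply filterdiff_differentiable_pt_lim.
eapply filterdiff_ext_lin.
- exact (filterdiff_mult_fct _ _ _ _ _ Rmult_comm Hh Hk).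
- intros [u v]. simpl. unfold plus, mult. simpl. ring.
Qed.

Lemma differentiable_pt_lim_minus (h k : R -> R -> R) x y hx hy kx ky :
  differentiable_pt_lim h x y hx hy -> differentiable_pt_lim k x y kx ky ->
  differentiable_pt_lim (fun u v => h u v - k u v) x y (hx - kx) (hy - ky).
Proof.
intros Hh Hk.
apply filterdiff_differentiable_pt_lim in Hh, Hk.
apply filterdiff_differentiable_pt_lim.
eapply filterdiff_ext_lin.
- exact (filterdiff_minus_fct _ _ _ _ Hh Hk).
- intros [u v]. simpl. unfold minus, plus, opp. simpl. ring.
Qed.

Lemma Ck2_pred k (h : R -> R -> R) : Ck2 (S k) h -> Ck2 k h.
Proof.
revert h; induction k as [| k IH]; intros h [Hc [Hex [Hx Hy]]].
- exact (conj Hc I).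
- exact (conj Hc (conj Hex (conj (IH _ Hx) (IH _ Hy)))).
Qed.

Lemma differentiable_pt_lim_Ck2_1 (h : R -> R -> R) x y :
  Ck2 1 h -> differentiable_pt_lim h x y (dx h x y) (dy h x y).
Proof.
intros [_ [Hex [[Hcx _] _]]].
apply filterdiff_differentiable_pt_lim.
eapply filterdiff_ext_lin.
- apply (is_derive_filterdiff h x y (dx h) (dy h x y)).
  + apply filter_forall. intros [u v]. exact (Derive_correct _ _ (proj1 (Hex u v))).
  + exact (Derive_correct _ _ (proj2 (Hex x y))).
  + apply Hcx.
- intros [u v]. reflexivity.
Qed.

Lemma differentiable_pt_lim_dx_dy (h : R -> R -> R) x y lx ly :
  differentiable_pt_lim h x y lx ly -> dx h x y = lx /\ dy h x y = ly.
Proof. exact (differentiable_pt_lim_unique h x y lx ly). Qed.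

Lemma differentiable_pt_lim_partials (h : R -> R -> R) x y lx ly :
  differentiable_pt_lim h x y lx ly ->
  differentiable_pt_lim h x y (dx h x y) (dy h x y).
Proof.
intros Hh. destruct (differentiable_pt_lim_unique _ _ _ _ _ Hh) as [Ex Ey].
unfold dx, dy. rewrite Ex, Ey. exact Hh.
Qed.

Lemma differentiable_pt_lim_Jac (f1 f2 : R -> R -> R) x y :
  Ck2 2 f1 -> Ck2 2 f2 ->
  differentiable_pt_lim (Jac f1 f2) x y (dx (Jac f1 f2) x y) (dy (Jac f1 f2) x y).
Proof.
intros [_ [_ [C1x C1y]]] [_ [_ [C2x C2y]]].
eapply differentiable_pt_lim_partials.
apply differentiable_pt_lim_minus; apply differentiable_pt_lim_mult;
  apply differentiable_pt_lim_Ck2_1; assumption.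
Qed.

Lemma differentiable_pt_lim_rot_in (h : R -> R -> R) c d x y lx ly :
  differentiable_pt_lim h (c * x - d * y) (d * x + c * y) lx ly ->
  differentiable_pt_lim (fun u v => h (c * u - d * v) (d * u + c * v)) x y
    (lx * c + ly * d) (lx * - d + ly * c).
Proof.
intros Hh.
apply (differentiable_pt_lim_comp h (fun u v => c * u - d * v) (fun u v => d * u + c * v));
  [exact Hh | |]; apply differentiable_pt_lim_linear; intros; ring.
Qed.

Definition conj_rot1 (f1 f2 : R -> R -> R) (a b c d : R) (x y : R) : R :=
  a * f1 (c * x - d * y) (d * x + c * y) - b * f2 (c * x - d * y) (d * x + c * y).
Definition conj_rot2 (f1 f2 : R -> R -> R) (a b c d : R) (x y : R) : R :=
  b * f1 (c * x - d * y) (d * x + c * y) + a * f2 (c * x - d * y) (d * x + c * y).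

Lemma differentiable_pt_lim_conj_rot (f1 f2 : R -> R -> R) a b c d x y p q r s :
  differentiable_pt_lim f1 (c * x - d * y) (d * x + c * y) p q ->
  differentiable_pt_lim f2 (c * x - d * y) (d * x + c * y) r s ->
  differentiable_pt_lim (conj_rot1 f1 f2 a b c d) x y
    (a * (p * c + q * d) + - b * (r * c + s * d))
    (a * (p * - d + q * c) + - b * (r * - d + s * c)) /\
  differentiable_pt_lim (conj_rot2 f1 f2 a b c d) x y
    (b * (p * c + q * d) + a * (r * c + s * d))
    (b * (p * - d + q * c) + a * (r * - d + s * c)).
Proof.
intros H1 H2.
pose proof (differentiable_pt_lim_rot_in _ _ _ _ _ _ _ H1) as R1.
pose proof (differentiable_pt_lim_rot_in _ _ _ _ _ _ _ H2) as R2.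
split.
- apply (differentiable_pt_lim_comp (fun u v => a * u - b * v)); [| exact R1 | exact R2].
  apply differentiable_pt_lim_linear. intros; ring.
- apply (differentiable_pt_lim_comp (fun u v => b * u + a * v)); [| exact R1 | exact R2].
  apply differentiable_pt_lim_linear. intros; ring.
Qed.

Lemma Jac_conj_rot (f1 f2 : R -> R -> R) a b c d x y :
  Ck2 1 f1 -> Ck2 1 f2 -> a ^ 2 + b ^ 2 = 1 -> c ^ 2 + d ^ 2 = 1 ->
  Jac (conj_rot1 f1 f2 a b c d) (conj_rot2 f1 f2 a b c d) x y
  = Jac f1 f2 (c * x - d * y) (d * x + c * y).
Proof.
intros C1 C2 Hab Hcd.
destruct (differentiable_pt_lim_conj_rot f1 f2 a b c d x y _ _ _ _
  (differentiable_pt_lim_Ck2_1 _ _ _ C1) (differentiable_pt_lim_Ck2_1 _ _ _ C2)) as [G1 G2].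
destruct (differentiable_pt_lim_dx_dy _ _ _ _ _ G1) as [E1x E1y].
destruct (differentiable_pt_lim_dx_dy _ _ _ _ _ G2) as [E2x E2y].
unfold Jac at 1. rewrite E1x, E1y, E2x, E2y.
transitivity ((a ^ 2 + b ^ 2) * (c ^ 2 + d ^ 2) * Jac f1 f2 (c * x - d * y) (d * x + c * y)).
- unfold Jac. ring.
- rewrite Hab, Hcd. ring.
Qed.

Lemma differentiable_pt_lim_Jac_conj_rot (f1 f2 : R -> R -> R) a b c d x y :
  Ck2 2 f1 -> Ck2 2 f2 -> a ^ 2 + b ^ 2 = 1 -> c ^ 2 + d ^ 2 = 1 ->
  let Jx := dx (Jac f1 f2) (c * x - d * y) (d * x + c * y) in
  let Jy := dy (Jac f1 f2) (c * x - d * y) (d * x + c * y) in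
  differentiable_pt_lim (Jac (conj_rot1 f1 f2 a b c d) (conj_rot2 f1 f2 a b c d)) x y
    (Jx * c + Jy * d) (Jx * - d + Jy * c).
Proof.
intros C1 C2 Hab Hcd Jx Jy.
apply (differentiable_pt_lim_ext (fun u v => Jac f1 f2 (c * u - d * v) (d * u + c * v))).
- exists (mkposreal 1 Rlt_0_1). intros u v _ _.
  symmetry. apply Jac_conj_rot; [apply Ck2_pred, C1 | apply Ck2_pred, C2 | exact Hab | exact Hcd].
- apply differentiable_pt_lim_rot_in, differentiable_pt_lim_Jac; assumption.
Qed.

Lemma rank2x2_0 : rank2x2 0 0 0 0 = 0%nat.
Proof.
unfold rank2x2, rank2.
replace (0 * 0 - 0 * 0) with 0 by ring.
destruct (Req_EM_T 0 0) as [_ | N]; [reflexivity | now contradiction N].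
Qed.

Lemma exists_inv_norm u v : u <> 0 \/ v <> 0 -> exists k, k ^ 2 * (u ^ 2 + v ^ 2) = 1.
Proof.
intros Huv.
assert (Hpos : 0 < u ^ 2 + v ^ 2).
{ destruct Huv as [Hu | Hv].
  - pose proof (pow2_gt_0 u Hu). pose proof (pow2_ge_0 v). lra.
  - pose proof (pow2_gt_0 v Hv). pose proof (pow2_ge_0 u). lra. }
pose proof (sqrt_lt_R0 _ Hpos) as Hn.
pose proof (sqrt_sqrt _ (Rlt_le _ _ Hpos)) as Hnn.
set (n := sqrt (u ^ 2 + v ^ 2)) in *.
exists (/ n). rewrite <- Hnn. field. lra.
Qed.

Lemma mul_neq0_of_sqr_mul_eq1 k w : k ^ 2 * w = 1 -> k * w <> 0.
Proof. intros Hk Z. apply R1_neq_R0. rewrite <- Hk. transitivity (k * (k * w)); [ring | rewrite Z; ring]. Qed.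

Lemma orthonormal_coords_eq0 p q c d :
  c ^ 2 + d ^ 2 = 1 -> p * c + q * d = 0 -> p * - d + q * c = 0 -> p = 0 /\ q = 0.
Proof.
intros Hcd H1 H2. split.
- transitivity (c * (p * c + q * d) - d * (p * - d + q * c)).
  + transitivity (p * (c ^ 2 + d ^ 2)); [rewrite Hcd | ]; ring.
  + rewrite H1, H2. ring.
- transitivity (d * (p * c + q * d) + c * (p * - d + q * c)).
  + transitivity (q * (c ^ 2 + d ^ 2)); [rewrite Hcd | ]; ring.
  + rewrite H1, H2. ring.
Qed.

Lemma exists_rotations_normal_form p q r s Jx Jy :
  ~ (p = 0 /\ q = 0 /\ r = 0 /\ s = 0) -> Jx <> 0 \/ Jy <> 0 ->
  p * - Jy + q * Jx = 0 -> r * - Jy + s * Jx = 0 ->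
  exists a b c d : R,
    a ^ 2 + b ^ 2 = 1 /\ c ^ 2 + d ^ 2 = 1 /\
    p * c + q * d = 0 /\ r * c + s * d = 0 /\
    b * (p * - d + q * c) + a * (r * - d + s * c) = 0 /\
    a * (p * - d + q * c) - b * (r * - d + s * c) <> 0 /\
    Jx * c + Jy * d = 0 /\ Jx * - d + Jy * c <> 0.
Proof.
intros Hnz HJ Hker1 Hker2.
destruct (exists_inv_norm _ _ HJ) as [k Hk].
set (c := k * - Jy). set (d := k * Jx).
assert (Hcd : c ^ 2 + d ^ 2 = 1) by (rewrite <- Hk; unfold c, d; ring).
assert (K1 : p * c + q * d = 0)
  by (transitivity (k * (p * - Jy + q * Jx)); [unfold c, d; ring | rewrite Hker1; ring]).
assert (K2 : r * c + s * d = 0)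
  by (transitivity (k * (r * - Jy + s * Jx)); [unfold c, d; ring | rewrite Hker2; ring]).
set (u1 := p * - d + q * c). set (u2 := r * - d + s * c).
assert (Hu : u1 <> 0 \/ u2 <> 0).
{ destruct (Req_dec u1 0) as [U1 | U1]; [| now left].
  destruct (Req_dec u2 0) as [U2 | U2]; [| now right].
  destruct (orthonormal_coords_eq0 _ _ _ _ Hcd K1 U1).
  destruct (orthonormal_coords_eq0 _ _ _ _ Hcd K2 U2).
  now exfalso; apply Hnz. }
destruct (exists_inv_norm _ _ Hu) as [m Hm].
exists (m * u1), (- (m * u2)), c, d. fold u1 u2.
split; [rewrite <- Hm; ring |].
split; [exact Hcd |].
split; [exact K1 |]. split; [exact K2 |].
split; [ring |].
split.
{ replace (m * u1 * u1 - - (m * u2) * u2) with (m * (u1 ^ 2 + u2 ^ 2)) by ring.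
  exact (mul_neq0_of_sqr_mul_eq1 _ _ Hm). }
split; [unfold c, d; ring |].
replace (Jx * - d + Jy * c) with (- (k * (Jx ^ 2 + Jy ^ 2))) by (unfold c, d; ring).
apply Ropp_neq_0_compat, mul_neq0_of_sqr_mul_eq1, Hk.
Qed.

Lemma partials_conj_rot (f1 f2 : R -> R -> R) a b c d x y :
  Ck2 2 f1 -> Ck2 2 f2 -> a ^ 2 + b ^ 2 = 1 -> c ^ 2 + d ^ 2 = 1 ->
  let g1 := conj_rot1 f1 f2 a b c d in
  let g2 := conj_rot2 f1 f2 a b c d in
  let u := c * x - d * y in
  let v := d * x + c * y in
  let p := dx f1 u v in let q := dy f1 u v in
  let r := dx f2 u v in let s := dy f2 u v in
  let Jx := dx (Jac f1 f2) u v in let Jy := dy (Jac f1 f2) u v in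
  dx g1 x y = a * (p * c + q * d) - b * (r * c + s * d) /\
  dy g1 x y = a * (p * - d + q * c) - b * (r * - d + s * c) /\
  dx g2 x y = b * (p * c + q * d) + a * (r * c + s * d) /\
  dy g2 x y = b * (p * - d + q * c) + a * (r * - d + s * c) /\
  dx (Jac g1 g2) x y = Jx * c + Jy * d /\
  dy (Jac g1 g2) x y = Jx * - d + Jy * c.
Proof.
intros C1 C2 Hab Hcd g1 g2 u v p q r s Jx Jy.
destruct (differentiable_pt_lim_conj_rot f1 f2 a b c d x y p q r s) as [G1 G2];
  try (apply differentiable_pt_lim_Ck2_1, Ck2_pred; assumption).
destruct (differentiable_pt_lim_dx_dy _ _ _ _ _ G1) as [E1x E1y].
destruct (differentiable_pt_lim_dx_dy _ _ _ _ _ G2) as [E2x E2y].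
destruct (differentiable_pt_lim_dx_dy _ _ _ _ _
  (differentiable_pt_lim_Jac_conj_rot f1 f2 a b c d x y C1 C2 Hab Hcd)) as [EJx EJy].
subst g1 g2.
repeat split; [rewrite E1x | rewrite E1y | exact E2x | exact E2y | exact EJx | exact EJy];
  ring.
Qed.

Theorem mainTheorem13 (f1 f2 : R -> R -> R) :
  smooth2 f1 -> smooth2 f2 ->
  one_generic f1 f2 ->
  cusp_point f1 f2 0 0 ->
  f1 0 0 = 0 -> f2 0 0 = 0 ->
  rankDf f1 f2 0 0 = 1%nat ->
  dJ_nonzero f1 f2 0 0 ->
  F1 f1 f2 0 0 = 0 -> F2 f1 f2 0 0 = 0 ->
  exists a b c d : R,
    a ^ 2 + b ^ 2 = 1 /\ c ^ 2 + d ^ 2 = 1 /\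
    let g1 := fun x y =>
      a * f1 (c * x - d * y) (d * x + c * y) - b * f2 (c * x - d * y) (d * x + c * y) in
    let g2 := fun x y =>
      b * f1 (c * x - d * y) (d * x + c * y) + a * f2 (c * x - d * y) (d * x + c * y) in
    dx g1 0 0 = 0 /\ dx g2 0 0 = 0 /\ dy g2 0 0 = 0 /\ dy g1 0 0 <> 0 /\
    dx (Jac g1 g2) 0 0 = 0 /\ dy (Jac g1 g2) 0 0 <> 0.
Proof.
intros S1 S2 _ _ _ _ Hrank HdJ HF1 HF2.
assert (Hnz : ~ (dx f1 0 0 = 0 /\ dy f1 0 0 = 0 /\ dx f2 0 0 = 0 /\ dy f2 0 0 = 0)).
{ intros (E1 & E2 & E3 & E4). unfold rankDf in Hrank.
  rewrite E1, E2, E3, E4, rank2x2_0 in Hrank. discriminate. }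
destruct (exists_rotations_normal_form _ _ _ _ _ _ Hnz HdJ HF1 HF2)
  as (a & b & c & d & Hab & Hcd & K1 & K2 & U2 & U1 & J1 & J2).
exists a, b, c, d. split; [exact Hab | split; [exact Hcd | intros g1 g2]].
destruct (partials_conj_rot f1 f2 a b c d 0 0 (S1 2%nat) (S2 2%nat) Hab Hcd)
  as (E1x & E1y & E2x & E2y & EJx & EJy).
cbv zeta in E1x, E1y, E2x, E2y, EJx, EJy.
unfold conj_rot1, conj_rot2 in E1x, E1y, E2x, E2y, EJx, EJy.
rewrite !Rmult_0_r, Rminus_0_r, Rplus_0_r in E1x, E1y, E2x, E2y, EJx, EJy.
subst g1 g2. rewrite E1x, E1y, E2x, E2y, EJx, EJy, K1, K2.
repeat split; try ring; assumption.
Qed.
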